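(* In partially synchronous systems, there is no deterministic protocol that solves Byzantine consensus (Validity, Agreement, Termination) in every system whose knowledge connectivity graph belongs to $\mathcal{G}_{di}$ when each process $i$ is given only its participant detector $PD_i$ as input and no process knows the fault threshold $f$. (This holds even with digital signatures, and even when faults are only crashes.)
   Context: System: finite set $\Pi$ of processes, partially synchronous (an unknown GST after which messages between correct processes arrive within an unknown $\delta$), a set $F$ of faulty processes with $|F|\le f$ for some fault threshold $f$, reliable authenticated channels. Each process $i$ has a participant detector $PD_i\subseteq\Pi$ (the processes it initially knows) and may only message processes it currently knows. The knowledge connectivity graph is $G_{di}=(\Pi,\{(i,j):j\in PD_i\})$. A digraph belongs to $k$-OSR PD if its underlying undirected graph is connected, its condensation has exactly one sink component, that sink is $k$-strongly connected, and every vertex outside it has $k$ node-disjoint paths to every vertex in it. $G_{safe}=G_{di}[\Pi\setminus F]$. $\mathcal{G}_{di}$: graphs whose $G_{safe}$ is in $(f+1)$-OSR PD with safe sink of size $\ge 2f+1$. Consensus: each correct process proposes a valid value (w.r.t. a predicate $\mathtt{valid}$); Validity: a correct process decides a valid value proposed by some process; Agreement: all correct processes decide the same value; Termination: every correct process eventually decides. *)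

From Stdlib Require List.
From mathcomp Require Import all_boot finmap.

Set Implicit Arguments.
Unset Strict Implicit.
Unset Printing Implicit Defensive.

Local Open Scope fset_scope.

(* Process identifiers are drawn from an unbounded universe (nat); a system  *)
(* is a finite set [Pi] of identifiers.                                      *)
Definition pid := nat.

(* A digraph on the vertex set V is given by an edge relation E; only edges *)
(* with both endpoints in V are considered.                                  *)

Definition reach (V : {fset pid}) (E : pid -> pid -> bool) (x y : pid) : Prop :=
  x \in V /\ exists p : seq pid,
    path (fun a b => E a b && (b \in V)) x p /\ last x p = y.

Definition und_connected (V : {fset pid}) (E : pid -> pid -> bool) : Prop :=
  forall x y, x \in V -> y \in V -> reach V (fun a b => E a b || E b a) x y.

Definition sink_component (V : {fset pid}) (E : pid -> pid -> bool)
    (S : {fset pid}) : Prop :=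
  [/\ S `<=` V, S != fset0,
      (forall x y, x \in S -> y \in S -> reach V E x y) &
      (forall x y, x \in S -> y \in V -> E x y -> y \in S)].

(* There are k node-disjoint paths from x to y in (V,E).  A path is given by *)
(* its sequence of internal vertices; paths are pairwise distinct and their  *)
(* internal vertices are pairwise disjoint and avoid the endpoints.          *)
Definition disjoint_paths (V : {fset pid}) (E : pid -> pid -> bool)
    (x y : pid) (k : nat) : Prop :=
  exists ps : seq (seq pid),
    [/\ size ps = k, uniq ps,
        (forall p, p \in ps ->
           [/\ path E x (rcons p y), all (fun v => v \in V) p,
               x \notin p & y \notin p]) &
        (forall p q v, p \in ps -> q \in ps -> p != q -> v \in p -> v \notin q)].

Definition k_strongly_connected (V : {fset pid}) (E : pid -> pid -> bool)
    (k : nat) : Prop :=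
  forall x y, x \in V -> y \in V -> x != y -> disjoint_paths V E x y k.

Definition induced (V : {fset pid}) (E : pid -> pid -> bool) :=
  fun a b => [&& E a b, a \in V & b \in V].

Definition k_OSR_with_sink (V : {fset pid}) (E : pid -> pid -> bool)
    (k : nat) (S : {fset pid}) : Prop :=
  [/\ und_connected V E,
      sink_component V E S,
      (forall S', sink_component V E S' -> S' = S),
      k_strongly_connected S (induced S E) k &
      (forall x y, x \in V -> x \notin S -> y \in S -> disjoint_paths V E x y k)].

Definition k_OSR (V : {fset pid}) (E : pid -> pid -> bool) (k : nat) : Prop :=
  exists S, k_OSR_with_sink V E k S.

Definition Gdi_edge (PD : pid -> {fset pid}) : pid -> pid -> bool :=
  fun i j => j \in PD i.

Definition system_ok (Pi : {fset pid}) (PD : pid -> {fset pid})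
    (f : nat) (F : {fset pid}) : Prop :=
  [/\ forall i, i \in Pi -> PD i `<=` Pi, F `<=` Pi & (#|` F| <= f)%N].

Definition in_Gdi (Pi : {fset pid}) (PD : pid -> {fset pid})
    (f : nat) (F : {fset pid}) : Prop :=
  exists S, k_OSR_with_sink (Pi `\` F) (Gdi_edge PD) f.+1 S
            /\ (2 * f + 1 <= #|` S|)%N.

(* A deterministic protocol.  A process is initialised with its own         *)
(* identifier, its participant detector PD_i and its proposal only (it is   *)
(* given neither Pi, nor n, nor f, nor GST, nor delta).  At each step it    *)
(* receives the (possibly empty) list of delivered messages, tagged with    *)
(* their (authenticated) sender, and outputs a list of (destination,        *)
(* message) pairs.  [p_ids m] is the list of process identifiers carried in *)
(* the content of m (through which processes may learn of other processes). *)
Record protocol (V : Type) := Protocol {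
  p_state : Type;
  p_msg : Type;
  p_ids : p_msg -> seq pid;
  p_init : pid -> {fset pid} -> V -> p_state;
  p_step : pid -> p_state -> seq (pid * p_msg) -> p_state * seq (pid * p_msg);
  p_decision : p_state -> option V }.

Arguments p_state {V} p.
Arguments p_msg {V} p.
Arguments p_ids {V} p _.
Arguments p_init {V} p _ _ _.
Arguments p_step {V} p _ _ _.
Arguments p_decision {V} p _.

(* The adversary of a run: the (unknown) global stabilisation time and      *)
(* delay bound, crash times of faulty processes, and the delivery time of   *)
(* the k-th message sent by process j at time s ([deliv j s k]).            *)
Record adversary := Adversary {
  a_GST : nat;
  a_delta : nat;
  a_crash : pid -> option nat;
  a_deliv : pid -> nat -> nat -> nat }.

Definition alive (Pi : {fset pid}) (A : adversary) (i : pid) (t : nat) : bool :=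
  (i \in Pi) && (if a_crash A i is Some c then (t < c)%N else true).

(* Messages delivered to i at time t, given the outputs [outs] of the steps *)
(* at times 0 .. t-1 ([nth] s outs = outputs of the step at time s).        *)
Definition inbox (M : Type) (Pi : {fset pid}) (A : adversary)
    (outs : seq (pid -> seq (pid * M))) (i t : pid) : seq (pid * M) :=
  flatten [seq flatten
     [seq (let o := nth (fun _ => [::]) outs s j in
           [seq (j, km.2.2) | km <- zip (iota 0 (size o)) o &
                              (km.2.1 == i) && (a_deliv A j s km.1 == t)])
     | j <- sort leq Pi]
   | s <- iota 0 t].

(* [exec P Pi PD prop A n] = (states before the step at time n,            *)
(*                            outputs of the steps at times 0 .. n-1).      *)
Fixpoint exec V (P : protocol V) (Pi : {fset pid}) (PD : pid -> {fset pid})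
    (prop : pid -> V) (A : adversary) (n : nat)
    : (pid -> p_state P) * seq (pid -> seq (pid * p_msg P)) :=
  match n with
  | 0 => (fun i => p_init P i (PD i) (prop i), [::])
  | n'.+1 =>
      let: (st, outs) := exec P Pi PD prop A n' in
      let res := fun i =>
        if alive Pi A i n' then p_step P i (st i) (inbox Pi A outs i n')
        else (st i, [::]) in
      (fun i => (res i).1, rcons outs (fun i => (res i).2))
  end.

Definition state_at V (P : protocol V) Pi PD prop A (i : pid) (t : nat) :=
  (exec P Pi PD prop A t).1 i.

Definition out_at V (P : protocol V) Pi PD prop A (i : pid) (t : nat) :=
  nth (fun _ => [::]) (exec P Pi PD prop A t.+1).2 t i.

Definition in_at V (P : protocol V) Pi PD prop A (i : pid) (t : nat) :=
  inbox Pi A (exec P Pi PD prop A t).2 i t.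

Definition knows V (P : protocol V) Pi PD prop A (i : pid) (t : nat) (x : pid)
    : Prop :=
  [\/ x = i, x \in PD i |
      exists s j m, (s <= t)%N /\ List.In (j, m) (in_at P Pi PD prop A i s) /\
                    (x = j \/ x \in p_ids P m)].

Definition respects_knowledge V (P : protocol V) Pi PD prop A : Prop :=
  forall i t d m, alive Pi A i t -> List.In (d, m) (out_at P Pi PD prop A i t) ->
    knows P Pi PD prop A i t d /\
    (forall x, x \in p_ids P m -> knows P Pi PD prop A i t x).

(* Admissible adversary for the system (Pi, F): only faulty processes crash *)
(* (crash faults, the weakest fault model considered), every message is     *)
(* eventually delivered (reliable channels) after at least one time unit,   *)
(* and partial synchrony: a message sent at time s between correct          *)
(* processes is delivered by max(s, GST) + delta.                           *)
Definition admissible V (P : protocol V) Pi PD prop (F : {fset pid})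
    (A : adversary) : Prop :=
  [/\ forall i c, a_crash A i = Some c -> i \in F,
      forall j s k, (s < a_deliv A j s k)%N &
      forall j s k i m,
        j \in Pi `\` F -> i \in Pi `\` F ->
        nth (i, m) (out_at P Pi PD prop A j s) k = (i, m) ->
        (k < size (out_at P Pi PD prop A j s))%N ->
        (a_deliv A j s k <= maxn s (a_GST A) + a_delta A)%N].

Definition decides V (P : protocol V) Pi PD prop A (i : pid) (v : V) : Prop :=
  exists t, p_decision P (state_at P Pi PD prop A i t) = Some v /\
    forall t', (t' < t)%N -> p_decision P (state_at P Pi PD prop A i t') = None.

Definition consensus_run V (valid : V -> Prop) (P : protocol V) Pi PD prop
    (F : {fset pid}) A : Prop :=
  [/\
      (forall i v, i \in Pi `\` F -> decides P Pi PD prop A i v ->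
         valid v /\ exists j, j \in Pi /\ prop j = v),
      (forall i j v w, i \in Pi `\` F -> j \in Pi `\` F ->
         decides P Pi PD prop A i v -> decides P Pi PD prop A j w -> v = w) &
      (forall i, i \in Pi `\` F -> exists v, decides P Pi PD prop A i v)].

Definition solves_consensus_Gdi V (valid : V -> Prop) (P : protocol V) : Prop :=
  forall (Pi : {fset pid}) (PD : pid -> {fset pid}) (f : nat) (F : {fset pid})
         (prop : pid -> V) (A : adversary),
    system_ok Pi PD f F ->
    in_Gdi Pi PD f F ->
    (forall i, i \in Pi `\` F -> valid (prop i)) ->
    admissible P Pi PD prop F A ->
    respects_knowledge P Pi PD prop A /\ consensus_run valid P Pi PD prop F A.

(* Let process 1 know nobody and processes 2, 3, 4 know everybody.  Alone,
   1 forms a legal system with f = 0, so it must decide its own proposal v0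
   by some time T1 without hearing from anyone.  With 1 crashed at time 0 and
   f = 1, the sink {2, 3, 4} of G_safe is 2-strongly connected and has 3
   processes, so process 2 must decide the common proposal v1 by some time T2.
   Since no process knows f, both executions can be glued into one fault-free
   execution on {1, 2, 3, 4} with f = 0 (the sink of G_di is then {1}) by
   delaying every message between 1 and the others beyond GST = max T1 T2:
   process 1 cannot tell it from its solo run, the others cannot tell it from
   the run where 1 crashed, so they decide v0 and v1, contradicting
   Agreement. *)

From mathcomp Require Import all_boot finmap.
Set Implicit Arguments.
Unset Strict Implicit.
Unset Printing Implicit Defensive.
Local Open Scope fset_scope.

Lemma exec_size V (P : protocol V) Pi PD prop A n :
  size (exec P Pi PD prop A n).2 = n.
Proof.
elim: n => //= n; case: (exec P Pi PD prop A n) => st outs /= <-.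
by rewrite size_rcons.
Qed.

Lemma exec_step V (P : protocol V) Pi PD prop A i n :
  (state_at P Pi PD prop A i n.+1, out_at P Pi PD prop A i n) =
  if alive Pi A i n then p_step P i (state_at P Pi PD prop A i n) (in_at P Pi PD prop A i n)
  else (state_at P Pi PD prop A i n, [::]).
Proof.
rewrite /state_at /out_at /in_at /=; move: (exec_size P Pi PD prop A n).
case: (exec P Pi PD prop A n) => st outs /= <-.
by rewrite nth_rcons ltnn eqxx; case: ifP => // _; case: p_step.
Qed.

Lemma nth_exec_outputs V (P : protocol V) Pi PD prop A i n s :
  (s < n)%N -> nth (fun _ => [::]) (exec P Pi PD prop A n).2 s i = out_at P Pi PD prop A i s.
Proof.
elim: n => // n IH; rewrite ltnS leq_eqVlt => /orP[/eqP -> // | lt_sn].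
rewrite -IH //=; case: (exec P Pi PD prop A n) (exec_size P Pi PD prop A n) => st outs /= size_outs.
by rewrite nth_rcons size_outs lt_sn.
Qed.

Definition msgs_to M (o : seq (pid * M)) (time : nat -> nat) (j i : pid) (t : nat) :
    seq (pid * M) :=
  [seq (j, km.2.2) | km <- zip (iota 0 (size o)) o & (km.2.1 == i) && (time km.1 == t)].

Lemma in_atE V (P : protocol V) Pi PD prop A i t :
  in_at P Pi PD prop A i t =
  flatten [seq flatten [seq msgs_to (out_at P Pi PD prop A j s) (a_deliv A j s) j i t
                       | j <- sort leq Pi] | s <- iota 0 t].
Proof.
rewrite /in_at /inbox; congr flatten; apply/eq_in_map => s.
rewrite mem_iota add0n => /andP[_ lt_st].
by congr flatten; apply/eq_map => j /=; rewrite nth_exec_outputs.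
Qed.

Lemma eq_msgs_to M (o : seq (pid * M)) time time' j i t :
  (forall k, (k < size o)%N -> nth 0 (map fst o) k = i -> (time k == t) = (time' k == t)) ->
  msgs_to o time j i t = msgs_to o time' j i t.
Proof.
rewrite /msgs_to => eq_time; congr map.
suff shifted n : (forall k, (k < size o)%N -> nth 0 (map fst o) k = i ->
                   (time (n + k)%N == t) = (time' (n + k)%N == t)) ->
    [seq km <- zip (iota n (size o)) o | (km.2.1 == i) && (time km.1 == t)] =
    [seq km <- zip (iota n (size o)) o | (km.2.1 == i) && (time' km.1 == t)].
  exact: shifted.
elim: o n {eq_time} => [|[d m] o IH] n eq_time //=.
rewrite (IH n.+1) => [|k lt_k dest_k]; last by rewrite addSnnS eq_time.
by case: eqP => //= dest; rewrite -[n]addn0 eq_time.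
Qed.

Lemma msgs_to_nil M (o : seq (pid * M)) time j i t :
  (forall k, (k < size o)%N -> nth 0 (map fst o) k = i -> time k != t) ->
  msgs_to o time j i t = [::].
Proof.
move=> undelivered; rewrite (@eq_msgs_to _ _ _ (fun _ => t.+1)).
  by rewrite /msgs_to; elim: (zip _ _) => //= km s; rewrite (gtn_eqF (ltnSn t)) andbF.
by move=> k lt_k dest_k; rewrite (gtn_eqF (ltnSn t)); apply/negbTE/undelivered.
Qed.

Lemma flatten_map_nil (T : eqType) (U : Type) (f : T -> seq U) (s : seq T) :
  (forall x, x \in s -> f x = [::]) -> flatten (map f s) = [::].
Proof.
elim: s => //= y s IH f_nil; rewrite f_nil ?mem_head // IH // => x s_x.
by rewrite f_nil // inE s_x orbT.
Qed.

Lemma flatten_map_single (T : eqType) (U : Type) (f : T -> seq U) (s : seq T) y :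
  uniq s -> y \in s -> (forall x, x \in s -> x != y -> f x = [::]) ->
  flatten (map f s) = f y.
Proof.
elim: s => //= x s IH /andP[s'x uniq_s]; rewrite inE => s_y f_nil.
have f_nil_s z : z \in s -> z != y -> f z = [::] by move=> s_z; apply: f_nil; rewrite inE s_z orbT.
case: (eqVneq y x) s'x s_y => [<- s'y _ | neq_yx _ /= s_y].
  by rewrite flatten_map_nil ?cats0 // => z s_z; apply: f_nil_s => //; apply: contraNneq s'y => <-.
by rewrite f_nil ?mem_head 1?eq_sym // IH.
Qed.

Lemma decides_prefix V (P : protocol V) Pi PD prop A i v :
  decides P Pi PD prop A i v ->
  exists T, forall Pi' PD' prop' A' i',
    (forall t, (t <= T)%N -> state_at P Pi' PD' prop' A' i' t = state_at P Pi PD prop A i t) ->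
    decides P Pi' PD' prop' A' i' v.
Proof.
case=> T [dec_T undec]; exists T => Pi' PD' prop' A' i' eq_states.
exists T; rewrite eq_states //; split=> // t lt_tT.
by rewrite eq_states ?undec // ltnW.
Qed.

Lemma unanimous_decision V (valid : V -> Prop) (P : protocol V) Pi PD F A v i :
  consensus_run valid P Pi PD (fun _ => v) F A -> i \in Pi `\` F ->
  decides P Pi PD (fun _ => v) A i v.
Proof.
case=> validity _ termination correct_i.
have [w dec_w] := termination i correct_i.
by have [_ [j [_ /= eq_vw]]] := validity i w correct_i dec_w; rewrite -eq_vw in dec_w.
Qed.

Lemma uniq_sort_fset (S : {fset pid}) : uniq (sort leq S).
Proof. by rewrite sort_uniq fset_uniq. Qed.

Section PartitionRun.

Variables (V : Type) (P : protocol V) (PD : pid -> {fset pid}) (Pi : {fset pid}) (a : pid).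
Variables (propX propW propY : pid -> V) (AX AW AY : adversary) (G : nat).

Local Notation stX := (state_at P [fset a] PD propX AX).
Local Notation outX := (out_at P [fset a] PD propX AX).
Local Notation stW := (state_at P Pi PD propW AW).
Local Notation outW := (out_at P Pi PD propW AW).
Local Notation stY := (state_at P Pi PD propY AY).
Local Notation outY := (out_at P Pi PD propY AY).

(* The run on [Pi] in which [a] is cut off from everybody else until [G]: a
   message is delivered after one step when its sender and destination lie on
   the same side of the partition [{a} | Pi \ {a}], and only after [G]
   otherwise.  The destinations are read off the isolated run of [a] and the
   run where [a] has crashed, which the simulation shows to coincide with
   those of the glued run up to [G]. *)
Definition partition_deliv (j s k : nat) : nat :=
  let o := if j == a then outX a s else outW j s in
  if (j == a) == (nth 0 (map fst o) k == a) then s.+1 else (maxn s G).+1.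

Hypothesis a_in_Pi : a \in Pi.
Hypothesis alive_isolated : forall t, alive Pi AY a t = alive [fset a] AX a t.
Hypothesis crashed_W : forall t, ~~ alive Pi AW a t.
Hypothesis alive_rest : forall j t, j != a -> alive Pi AY j t = alive Pi AW j t.
Hypothesis prop_isolated : propY a = propX a.
Hypothesis prop_rest : forall j, j != a -> propY j = propW j.
Hypothesis deliv_X : forall s k, a_deliv AX a s k = s.+1.
Hypothesis deliv_W : forall j s k, j != a -> a_deliv AW j s k = s.+1.
Hypothesis deliv_Y : forall j s k, a_deliv AY j s k = partition_deliv j s k.

Definition states_agree t :=
  stY a t = stX a t /\ forall j, j != a -> stY j t = stW j t.

Definition outputs_agree s :=
  [/\ outY a s = outX a s, outW a s = [::] & forall j, j != a -> outY j s = outW j s].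

Lemma late_delivery s n : (n <= G)%N -> (maxn s G).+1 != n.
Proof. by move=> le_nG; rewrite gtn_eqF // ltnS (leq_trans le_nG) ?leq_maxr. Qed.

Lemma in_at_isolated n : (n <= G)%N -> (forall s, (s < n)%N -> outputs_agree s) ->
  in_at P Pi PD propY AY a n = in_at P [fset a] PD propX AX a n.
Proof.
move=> le_nG agree; rewrite !in_atE; congr flatten; apply/eq_in_map => s.
rewrite mem_iota add0n => /andP[_ lt_sn]; have [outY_a _ outY_rest] := agree s lt_sn.
rewrite !(@flatten_map_single _ _ _ _ a) ?uniq_sort_fset ?mem_sort ?inE //.
- rewrite outY_a; apply: eq_msgs_to => k _ dest_k.
  by rewrite deliv_Y deliv_X /partition_deliv eqxx dest_k eqxx.
- by move=> j; rewrite mem_sort inE => /eqP ->; rewrite eqxx.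
move=> j _ neq_ja; rewrite outY_rest //; apply: msgs_to_nil => k _ dest_k.
by rewrite deliv_Y /partition_deliv (negbTE neq_ja) dest_k eqxx late_delivery.
Qed.

Lemma in_at_rest n i : i != a -> (n <= G)%N -> (forall s, (s < n)%N -> outputs_agree s) ->
  in_at P Pi PD propY AY i n = in_at P Pi PD propW AW i n.
Proof.
move=> neq_ia le_nG agree; rewrite !in_atE; congr flatten; apply/eq_in_map => s.
rewrite mem_iota add0n => /andP[_ lt_sn]; have [outY_a outW_a outY_rest] := agree s lt_sn.
congr flatten; apply/eq_map => j /=; case: (eqVneq j a) => [-> | neq_ja].
  rewrite outW_a; apply: msgs_to_nil => k _ dest_k.
  by rewrite deliv_Y /partition_deliv eqxx -outY_a dest_k (negbTE neq_ia) late_delivery.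
rewrite outY_rest //; apply: eq_msgs_to => k _ dest_k.
by rewrite deliv_Y deliv_W // /partition_deliv (negbTE neq_ja) dest_k (negbTE neq_ia).
Qed.

Lemma partition_step n : (n <= G)%N -> states_agree n ->
  (forall s, (s < n)%N -> outputs_agree s) -> states_agree n.+1 /\ outputs_agree n.
Proof.
move=> le_nG [stY_a stY_rest] agree.
have [st_a out_a] : (stY a n.+1, outY a n) = (stX a n.+1, outX a n).
  by rewrite !exec_step alive_isolated stY_a in_at_isolated.
have [_ outW_a] : (stW a n.+1, outW a n) = (stW a n, [::]).
  by rewrite exec_step (negbTE (crashed_W n)).
have step_rest j : j != a -> (stY j n.+1, outY j n) = (stW j n.+1, outW j n).
  by move=> neq_ja; rewrite !exec_step alive_rest // stY_rest // in_at_rest.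
split; split=> // j neq_ja; by case: (step_rest j neq_ja).
Qed.

Lemma partition_agrees n : (n <= G.+1)%N ->
  states_agree n /\ forall s, (s < n)%N -> outputs_agree s.
Proof.
elim: n => [_ | n IH le_nG].
  by split=> //; split=> [|j neq_ja]; rewrite /state_at /= ?prop_isolated ?prop_rest.
have [states_n outputs_n] := IH (ltnW le_nG).
have [states_Sn output_n] := partition_step le_nG states_n outputs_n.
split=> // s; rewrite ltnS leq_eqVlt => /orP[/eqP -> // | ]; exact: outputs_n.
Qed.

End PartitionRun.

Definition Pi4 : {fset pid} := [fset 1; 2; 3; 4].

Definition pd_sink1 (i : pid) : {fset pid} := if i == 1 then fset0 else Pi4.

Lemma in_Pi4 x : (x \in Pi4) = [|| x == 1, x == 2, x == 3 | x == 4].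
Proof. by rewrite !inE -!orbA. Qed.

Lemma in_Pi4_crash1 x : (x \in Pi4 `\` [fset 1]) = [|| x == 2, x == 3 | x == 4].
Proof. by rewrite in_fsetD in_Pi4 !inE; case: x => [|[|[|[|[|x]]]]]. Qed.

Lemma in_fset234 x : (x \in [fset 2; 3; 4]) = [|| x == 2, x == 3 | x == 4].
Proof. by rewrite !inE -!orbA. Qed.

Lemma pd_sink1_edge x y : x != 1 -> Gdi_edge pd_sink1 x y = (y \in Pi4).
Proof. by rewrite /Gdi_edge /pd_sink1 => /negbTE ->. Qed.

Lemma pd_sink1_edge1 y : Gdi_edge pd_sink1 1 y = false.
Proof. by rewrite /Gdi_edge /pd_sink1 eqxx inE. Qed.

Lemma Pi4_ok f F : F `<=` Pi4 -> (#|` F| <= f)%N -> system_ok Pi4 pd_sink1 f F.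
Proof. by split=> // i _; rewrite /pd_sink1; case: ifP => // _; exact: fsub0set. Qed.

Lemma solo_ok : system_ok [fset 1] pd_sink1 0 fset0.
Proof. by split=> [i|//|]; rewrite ?cardfs0 // inE => /eqP ->; exact: fsub0set. Qed.

Lemma solo_in_Gdi : in_Gdi [fset 1] pd_sink1 0 fset0.
Proof.
have in_solo x : (x \in [fset 1] `\` fset0) = (x == 1) by rewrite !inE.
exists [fset 1]; split; last by rewrite cardfs1.
split.
- move=> x y; rewrite !in_solo => /eqP -> /eqP ->; split; first by rewrite in_solo.
  by exists [::].
- split.
  + by apply/fsubsetP => z; rewrite inE in_solo.
  + by apply/fset0Pn; exists 1; rewrite inE.
  + move=> x y; rewrite !inE => /eqP -> /eqP ->; split; first by rewrite in_solo.
    by exists [::].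
  + by move=> x y _; rewrite in_solo inE.
- move=> S' [/fsubsetP sub_S' /fset0Pn [w S'_w] _ _]; apply/fsetP => z; rewrite inE.
  apply/idP/idP => [/sub_S' | /eqP ->]; first by rewrite in_solo.
  by have := sub_S' _ S'_w; rewrite in_solo => /eqP <-.
- by move=> x y; rewrite !inE => /eqP -> /eqP ->; rewrite eqxx.
- by move=> x y; rewrite in_solo inE => ->.
Qed.

Lemma Pi4_in_Gdi : in_Gdi Pi4 pd_sink1 0 fset0.
Proof.
have in_Pi4_0 x : (x \in Pi4 `\` fset0) = (x \in Pi4) by rewrite in_fsetD inE.
exists [fset 1]; split; last by rewrite cardfs1.
split.
- move=> x y Pi4_x Pi4_y; split => //; exists [:: 2; y]; split => //=.
  move: Pi4_x Pi4_y; rewrite !in_Pi4_0 => Pi4_x Pi4_y.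
  by rewrite !(pd_sink1_edge (x := 2)) // Pi4_x Pi4_y orbT in_Pi4.
- split.
  + by apply/fsubsetP => z; rewrite inE in_Pi4_0 in_Pi4 => ->.
  + by apply/fset0Pn; exists 1; rewrite inE.
  + move=> x y; rewrite !inE => /eqP -> /eqP ->; split; first by rewrite in_Pi4_0 in_Pi4.
    by exists [::].
  + by move=> x y; rewrite inE => /eqP ->; rewrite pd_sink1_edge1.
- move=> S' [/fsubsetP sub_S' /fset0Pn [w S'_w] scc closed].
  have S'_1 : 1 \in S'.
    case: (eqVneq w 1) => [<- // | neq_w1].
    by apply: (closed w); rewrite ?in_Pi4_0 ?pd_sink1_edge ?in_Pi4.
  apply/fsetP => z; rewrite inE; apply/idP/idP => [S'_z | /eqP -> //].
  have [_ [[|b p] [/= path_p last_p]]] := scc _ _ S'_1 S'_z; first by rewrite -last_p.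
  by move: path_p.
- by move=> x y; rewrite !inE => /eqP -> /eqP ->; rewrite eqxx.
- move=> x y _ S'x; rewrite inE => /eqP ->.
  have neq_x1 : x != 1 by apply: contraNneq S'x => ->; rewrite inE.
  exists [:: [::]]; split => //.
  + by move=> p; rewrite inE => /eqP -> /=; rewrite pd_sink1_edge // in_Pi4.
  + by move=> p q v; rewrite !inE => /eqP -> /eqP ->; rewrite eqxx.
Qed.

Lemma Pi4_crash1_in_Gdi : in_Gdi Pi4 pd_sink1 1 [fset 1].
Proof.
have neq1 x : x \in [fset 2; 3; 4] -> x != 1 by rewrite in_fset234 => /or3P[] /eqP ->.
exists [fset 2; 3; 4]; split; last by rewrite fsetUC cardfsU1 cardfs2 !inE.
split.
- move=> x y safe_x safe_y; split => //; exists [:: 2; y]; split => //=.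
  move: safe_x safe_y; rewrite !in_Pi4_crash1 => safe_x safe_y.
  rewrite !(pd_sink1_edge (x := 2)) // !in_Pi4 safe_y.
  by case/or3P: safe_x => /eqP ->; rewrite !orbT.
- split.
  + by apply/fsubsetP => z; rewrite in_fset234 in_Pi4_crash1.
  + by apply/fset0Pn; exists 2; rewrite in_fset234.
  + move=> x y S_x S_y; split; first by rewrite in_Pi4_crash1 -in_fset234.
    exists [:: y]; split => //=; rewrite pd_sink1_edge ?neq1 // in_Pi4_crash1 -in_fset234 S_y andbT.
    by move: S_y; rewrite in_fset234 in_Pi4 => /or3P[] /eqP ->.
  + by move=> x y _; rewrite in_Pi4_crash1 in_fset234.
- move=> S' [/fsubsetP sub_S' /fset0Pn [w S'_w] _ closed].
  have neq_w1 : w != 1 by move: (sub_S' _ S'_w); rewrite in_Pi4_crash1 => /or3P[] /eqP ->.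
  apply/fsetP => z; rewrite in_fset234 -in_Pi4_crash1.
  apply/idP/idP => [/sub_S' // | safe_z].
  apply: (closed w) => //; rewrite pd_sink1_edge //.
  by move: safe_z; rewrite in_Pi4_crash1 in_Pi4 => /or3P[] /eqP ->.
- move=> x y S_x S_y neq_xy.
  (* the direct edge, and the path through the third vertex of the sink *)
  exists [:: [::]; [:: (9 - x - y)%N]].
  move: S_x S_y neq_xy; rewrite !in_fset234 => /or3P[] /eqP -> /or3P[] /eqP -> //= _;
  (split => //; [move=> p; rewrite !inE => /orP[] /eqP -> /=;
                 rewrite /induced /Gdi_edge /pd_sink1 /= ?in_Pi4 ?in_fset234 //
  | by move=> p q v; rewrite !inE => /orP[] /eqP -> /orP[] /eqP -> //=; rewrite ?inE //= => /eqP ->]).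
- by move=> x y; rewrite in_Pi4_crash1 in_fset234 => ->.
Qed.

Definition sync_adv : adversary := Adversary 0 1 (fun _ => None) (fun _ s _ => s.+1).

Definition crash1_adv : adversary :=
  Adversary 0 1 (fun i => if i == 1 then Some 0 else None) (fun _ s _ => s.+1).

Section Counterexample.

Variables (V : Type) (valid : V -> Prop) (v0 v1 : V) (P : protocol V).
Hypotheses (valid_v0 : valid v0) (valid_v1 : valid v1).
Hypothesis solves : solves_consensus_Gdi valid P.

Definition mixed_prop (i : pid) : V := if i == 1 then v0 else v1.

Definition partition_adv (G : nat) : adversary :=
  Adversary G 1 (fun _ => None)
    (partition_deliv P pd_sink1 Pi4 1 (fun _ => v0) (fun _ => v1) sync_adv crash1_adv G).

Lemma solo_decides : decides P [fset 1] pd_sink1 (fun _ => v0) sync_adv 1 v0.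
Proof.
have admissible_sync : admissible P [fset 1] pd_sink1 (fun _ => v0) fset0 sync_adv.
  by split=> //= j s k *; rewrite maxn0 addn1.
have [_ consensus] := solves solo_ok solo_in_Gdi (fun _ _ => valid_v0) admissible_sync.
by apply: unanimous_decision consensus _; rewrite !inE.
Qed.

Lemma crash1_decides : decides P Pi4 pd_sink1 (fun _ => v1) crash1_adv 2 v1.
Proof.
have admissible_crash1 : admissible P Pi4 pd_sink1 (fun _ => v1) [fset 1] crash1_adv.
  split=> //= [i c | j s k *]; last by rewrite maxn0 addn1.
  by case: eqP => [-> | //]; rewrite inE.
have ok : system_ok Pi4 pd_sink1 1 [fset 1].
  by apply: Pi4_ok; rewrite ?cardfs1 // fsub1set in_Pi4.
have [_ consensus] := solves ok Pi4_crash1_in_Gdi (fun _ _ => valid_v1) admissible_crash1.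
by apply: unanimous_decision consensus _; rewrite in_Pi4_crash1.
Qed.

Lemma partition_agreement G v w :
  decides P Pi4 pd_sink1 mixed_prop (partition_adv G) 1 v ->
  decides P Pi4 pd_sink1 mixed_prop (partition_adv G) 2 w -> v = w.
Proof.
have valid_mixed i : i \in Pi4 `\` fset0 -> valid (mixed_prop i).
  by rewrite /mixed_prop; case: ifP.
have admissible_partition : admissible P Pi4 pd_sink1 mixed_prop fset0 (partition_adv G).
  split=> //= j s k *; rewrite /partition_deliv; case: ifP => _; rewrite ?addn1 ltnS ?leq_maxl //.
have [_ [_ agreement _]] :=
  solves (Pi4_ok (fsub0set _) (leqnn _)) Pi4_in_Gdi valid_mixed admissible_partition.
by apply: agreement; rewrite in_fsetD inE in_Pi4.
Qed.

Lemma partition_run_agrees G t : (t <= G.+1)%N ->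
  states_agree P pd_sink1 Pi4 1 (fun _ => v0) (fun _ => v1) mixed_prop
               sync_adv crash1_adv (partition_adv G) t.
Proof.
move=> le_tG; apply: (proj1 (partition_agrees _ _ _ _ _ _ _ _ _ le_tG)) => //.
- by rewrite in_Pi4.
- by move=> t'; rewrite /alive !inE.
- by move=> t'; rewrite /alive /= andbF.
- by move=> j t' /negbTE neq_j1; rewrite /alive /= neq_j1.
- by move=> j /negbTE neq_j1; rewrite /mixed_prop neq_j1.
Qed.

End Counterexample.

Theorem theorem7 (V : Type) (valid : V -> Prop) (v0 v1 : V) :
  v0 <> v1 -> valid v0 -> valid v1 ->
  ~ exists P : protocol V, solves_consensus_Gdi valid P.
Proof.
move=> neq_v0v1 valid_v0 valid_v1 [P solves]; apply: neq_v0v1.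
have [T1 solo_dec] := decides_prefix (solo_decides valid_v0 solves).
have [T2 crash1_dec] := decides_prefix (crash1_decides valid_v1 solves).
pose G := maxn T1 T2.
have below_G T t : (T <= G)%N -> (t <= T)%N -> (t <= G.+1)%N.
  by move=> le_TG le_tT; rewrite (leq_trans le_tT) // (leq_trans le_TG).
apply: (partition_agreement valid_v0 valid_v1 solves (G := G)).
- apply: solo_dec => t le_tT1.
  by have [-> _] := partition_run_agrees v0 v1 P (below_G _ _ (leq_maxl T1 T2) le_tT1).
- apply: crash1_dec => t le_tT2.
  by have [_ ->] := partition_run_agrees v0 v1 P (below_G _ _ (leq_maxr T1 T2) le_tT2).
Qed.
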